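(* Let $S$ be a semidomain that is additively reduced, additively Furstenberg, and satisfies $\mathscr{A}_+(S)=S^\times$, and let $G$ be a torsion-free abelian group. Let $f=s_0x^{g_0}+s_1x^{g_1}\in S[G]$ with $s_0,s_1\in S\setminus\{0\}$ and $g_0>g_1$ in $G$. Then: (1) if $s_0\in S^\times$ or $s_1\in S^\times$, then $f$ is irreducible; (2) if $s_0\notin S^\times$ and $s_1\notin S^\times$, then $f$ is the sum of two irreducible elements of $S[G]$.
   Context: A semidomain is a subsemiring (containing $0$ and $1$) of an integral domain; $S^\times$ is the unit group of the multiplicative monoid $S\setminus\{0\}$. $S$ is additively reduced if $0$ is the only invertible element of $(S,+)$. An additive atom is a nonzero $a\in S$ with $a=b+c$ implying $b=0$ or $c=0$; $\mathscr{A}_+(S)$ is the set of additive atoms. $S$ is additively Furstenberg if every nonzero $s\in S$ equals $a+t$ with $a\in\mathscr{A}_+(S)$, $t\in S$. $G$ carries a fixed total order compatible with addition. $S[G]$ is the semidomain of formal finite sums $\sum_{g\in G}s_gx^g$ with polynomial operations. $f\in S[G]$ is irreducible if it is nonzero, a nonunit, and $f=pq$ implies $p$ or $q$ is a unit of $S[G]$. *)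

From HB Require Import structures.
From mathcomp Require Import all_boot all_order all_algebra.
Set Implicit Arguments. Unset Strict Implicit. Unset Printing Implicit Defensive.
Import Order.TTheory GRing.Theory.
Local Open Scope ring_scope.

(* A semidomain is modelled as a predicate S on an integral domain R that is
   closed under the semiring operations (contains 0, 1, closed under +, * ). *)

Section Semidomain.
Variables (R : idomainType) (S : semiringClosed R).

Definition unitS (x : R) : Prop :=
  x \in S /\ x != 0 /\ exists2 y, y \in S & x * y = 1.

Definition add_reduced : Prop :=
  forall x, x \in S -> (exists2 y, y \in S & x + y = 0) -> x = 0.

Definition add_atom (a : R) : Prop :=
  a \in S /\ a != 0 /\
  forall b c, b \in S -> c \in S -> a = b + c -> b = 0 \/ c = 0.

Definition add_furstenberg : Prop :=
  forall s, s \in S -> s != 0 -> exists a t, add_atom a /\ t \in S /\ s = a + t.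

Definition atoms_eq_units : Prop := forall x, add_atom x <-> unitS x.
End Semidomain.

Definition ordered_group (G : zmodType) (lt : rel G) : Prop :=
  [/\ (forall x, ~~ lt x x),
      (forall x y z, lt x y -> lt y z -> lt x z),
      (forall x y, x != y -> lt x y || lt y x) &
      (forall x y z, lt x y -> lt (x + z) (y + z))].

Definition torsion_free (G : zmodType) : Prop :=
  forall (g : G) (n : nat), g *+ n.+1 = 0 -> g = 0.

(* Formal finite sums sum_i r_i x^{g_i}, represented by a list of terms. *)
Section GroupAlgebra.
Variables (R : idomainType) (G : zmodType).

Definition gsum := seq (R * G).

Definition gcoef (p : gsum) (g : G) : R := \sum_(t <- p | t.2 == g) t.1.

Definition gsum_eq (p q : gsum) : Prop := forall g, gcoef p g = gcoef q g.

Definition gadd (p q : gsum) : gsum := p ++ q.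
Definition gmul (p q : gsum) : gsum :=
  [seq (t.1 * u.1, t.2 + u.2) | t <- p, u <- q].
Definition gzero : gsum := [::].
Definition gone : gsum := [:: (1, 0)].

Variable S : semiringClosed R.

Definition inSG (p : gsum) : Prop := forall g, gcoef p g \in S.

Definition unitSG (p : gsum) : Prop :=
  inSG p /\ exists q, inSG q /\ gsum_eq (gmul p q) gone.

Definition irreducibleSG (f : gsum) : Prop :=
  [/\ inSG f, ~ gsum_eq f gzero, ~ unitSG f &
      forall p q, inSG p -> inSG q -> gsum_eq f (gmul p q) -> unitSG p \/ unitSG q].
End GroupAlgebra.

From mathcomp Require Import all_boot all_order all_algebra.
From Stdlib Require Import Classical.
Import GRing.Theory.
Local Open Scope ring_scope.

(* In an additively reduced semidomain nothing cancels in a product of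
   elements of S[G]: if c_a(p) and c_b(q) are nonzero then so is c_{a+b}(pq).
   Hence if both factors of a binomial had two support points x1 < x2 and
   y1 < y2, the three exponents x1+y1 < x1+y2 < x2+y2 would all lie in its
   two-point support; so one factor is a monomial c x^a, and a unit
   coefficient of the binomial makes c a unit of S.  For (2), Furstenberg
   writes s_i = a_i + t_i with a_i an additive atom, i.e. a unit, and t_i
   nonzero because s_i is not a unit; then
   f = (a_0 x^{g_0} + t_1 x^{g_1}) + (t_0 x^{g_0} + a_1 x^{g_1}),
   and both summands are irreducible by (1). *)

Set Implicit Arguments. Unset Strict Implicit.

Section GroupAlgebra.
Variables (R : idomainType) (G : zmodType).
Implicit Types (p q : gsum R G) (a b g h : G).

Lemma gcoef_cat p q g : gcoef (p ++ q) g = gcoef p g + gcoef q g.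
Proof. by rewrite /gcoef big_cat. Qed.

Lemma gcoef_seq1 (c : R) a g : gcoef [:: (c, a)] g = if a == g then c else 0.
Proof. by rewrite /gcoef big_cons big_nil /=; case: (a == g); rewrite ?addr0. Qed.

Lemma gcoef_seq2 (c d : R) a b g :
  gcoef [:: (c, a); (d, b)] g =
  (if a == g then c else 0) + (if b == g then d else 0).
Proof. by rewrite (gcoef_cat [:: _] [:: _]) !gcoef_seq1. Qed.

Lemma gcoef_mull p q h :
  gcoef (gmul p q) h = \sum_(t <- p) t.1 * gcoef q (h - t.2).
Proof.
rewrite /gcoef /gmul big_mkcond big_allpairs_dep /=; apply: eq_bigr => t _.
rewrite big_distrr [RHS]big_mkcond /=; apply: eq_bigr => u _.
by rewrite [u.2 == _]eq_sym subr_eq addrC eq_sym; case: ifP.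
Qed.

Lemma gcoef_mulr p q h :
  gcoef (gmul p q) h = \sum_(u <- q) gcoef p (h - u.2) * u.1.
Proof.
rewrite /gcoef /gmul big_mkcond big_allpairs_dep /= exchange_big /=.
apply: eq_bigr => u _; rewrite big_distrl [RHS]big_mkcond /=.
by apply: eq_bigr => t _; rewrite [t.2 == _]eq_sym subr_eq eq_sym; case: ifP.
Qed.

Lemma gmulC p q : gsum_eq (gmul p q) (gmul q p).
Proof.
by move=> h; rewrite gcoef_mulr gcoef_mull; apply: eq_bigr => t _; rewrite mulrC.
Qed.

Lemma gcoef_mul0 p q h : (forall g, gcoef q g = 0) -> gcoef (gmul p q) h = 0.
Proof. by move=> q0; rewrite gcoef_mull big1 // => t _; rewrite q0 mulr0. Qed.

Lemma gcoef_mul_exponents p q h (K : seq G) :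
  uniq K -> {subset map snd p <= K} ->
  gcoef (gmul p q) h = \sum_(g <- K) gcoef p g * gcoef q (h - g).
Proof.
move=> uK pK; rewrite gcoef_mull.
under [RHS]eq_bigr => g _ do rewrite [gcoef p g]/gcoef big_distrl big_mkcond /=.
rewrite [RHS]exchange_big /=; apply: eq_big_seq => t tp.
have tK : t.2 \in K by apply/pK/map_f.
rewrite (bigD1_seq t.2) //= eqxx big1 ?addr0 // => g /negbTE gt.
by rewrite eq_sym gt.
Qed.

Lemma gcoef_mulD1 p q a h :
  gcoef (gmul p q) h = gcoef p a * gcoef q (h - a) +
    \sum_(g <- undup (a :: map snd p) | g != a) gcoef p g * gcoef q (h - g).
Proof.
have uK := undup_uniq (a :: map snd p).
rewrite (gcoef_mul_exponents q h uK) => [|g gp]; last first.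
  by rewrite mem_undup in_cons gp orbT.
by rewrite (bigD1_seq a) // mem_undup mem_head.
Qed.

Definition monomial p a := forall g, gcoef p g != 0 -> g = a.

Lemma gcoef_mul_monomial p q a h :
  monomial p a -> gcoef (gmul p q) h = gcoef p a * gcoef q (h - a).
Proof.
move=> pa; rewrite (gcoef_mulD1 p q a) big1 ?addr0 // => g ga.
by have [->|/pa gaE] := eqVneq (gcoef p g) 0; [rewrite mul0r | rewrite gaE eqxx in ga].
Qed.

Lemma ordered_support (lt : rel G) p :
  ordered_group lt -> ~ (exists a, monomial p a) ->
  exists a1 a2, [/\ lt a1 a2, gcoef p a1 != 0 & gcoef p a2 != 0].
Proof.
case=> _ _ total _ not_mono.
have [a pa] : exists a, gcoef p a != 0.
  apply: NNPP => none; apply: not_mono; exists 0 => g pg.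
  by case: none; exists g.
have [b [pb ba]] : exists b, gcoef p b != 0 /\ b != a.
  apply: NNPP => none; apply: not_mono; exists a => g pg.
  by apply: NNPP => ga; apply: none; exists g; split; last apply/eqP.
by case/orP: (total _ _ ba) => l; [exists b, a | exists a, b].
Qed.

Variable S : semiringClosed R.

Lemma monomial_unitSG p q a :
  inSG S p -> inSG S q -> monomial p a ->
  (exists h, unitS S (gcoef (gmul p q) h)) -> unitSG S p.
Proof.
move=> Sp Sq pa [h [_ [_ [y Sy]]]]; rewrite (gcoef_mul_monomial q _ pa) => yE.
split=> //; exists [:: (gcoef q (h - a) * y, - a)]; split.
  by move=> g; rewrite gcoef_seq1; case: ifP => _; [apply: rpredM | apply: rpred0].
move=> g; rewrite (gcoef_mul_monomial _ _ pa) !gcoef_seq1.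
rewrite [- a == _]eq_sym subr_eq addNr eq_sym.
by case: ifP => _; [rewrite mulrA | rewrite mulr0].
Qed.

Hypothesis S_add_reduced : add_reduced S.

(* The remaining terms of c_{a+b}(pq) lie in S, so additive reducedness
   forbids them to cancel the nonzero product c_a(p) c_b(q). *)
Lemma gcoef_mul_neq0 p q a b :
  inSG S p -> inSG S q -> gcoef p a != 0 -> gcoef q b != 0 ->
  gcoef (gmul p q) (a + b) != 0.
Proof.
move=> Sp Sq pa qb; rewrite (gcoef_mulD1 p q a) addrAC subrr add0r.
apply: contraNneq (mulf_neq0 pa qb) => cancel.
apply/eqP/S_add_reduced; first exact: rpredM.
set rest := \sum_(g <- _ | _) _ in cancel.
by exists rest => //; apply: rpred_sum => g _; apply: rpredM.
Qed.

Lemma unitSG_monomial p : unitSG S p -> exists a, monomial p a.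
Proof.
case=> Sp [q [Sq pq1]].
have [[b qb] | q0] := classic (exists b, gcoef q b != 0).
  exists (- b) => g pg; have := gcoef_mul_neq0 Sp Sq pg qb.
  rewrite pq1 gcoef_seq1; have [gb _ | _] := eqVneq 0 (g + b); last by rewrite eqxx.
  by apply/eqP; rewrite -addr_eq0 -gb.
have := pq1 0; rewrite gcoef_mul0 ?gcoef_seq1 ?eqxx => [/esym/eqP|g].
  by rewrite oner_eq0.
by apply: NNPP => qg; apply: q0; exists g; apply/eqP.
Qed.

Lemma factor_monomial (lt : rel G) p q g0 g1 :
  ordered_group lt -> inSG S p -> inSG S q ->
  (forall g, gcoef (gmul p q) g != 0 -> g = g0 \/ g = g1) ->
  (exists a, monomial p a) \/ (exists a, monomial q a).
Proof.
move=> og Sp Sq supp; apply: NNPP => /not_or_and [].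
move=> /(ordered_support og) [x1 [x2 [x12 px1 px2]]].
move=> /(ordered_support og) [y1 [y2 [y12 qy1 qy2]]].
case: og => irr trans _ compat.
have l1 : lt (x1 + y1) (x1 + y2) by rewrite ![x1 + _]addrC; apply: compat.
have l2 : lt (x1 + y2) (x2 + y2) by apply: compat.
have l3 := trans _ _ _ l1 l2.
have in_supp x y : gcoef p x != 0 -> gcoef q y != 0 -> x + y = g0 \/ x + y = g1.
  by move=> px qy; apply/supp/gcoef_mul_neq0.
move: l1 l2 l3.
by case: (in_supp _ _ px1 qy1) (in_supp _ _ px1 qy2) (in_supp _ _ px2 qy2)
  => -> [] -> [] ->; rewrite ?(negbTE (irr _)).
Qed.

Lemma binomial_irreducible (lt : rel G) (s0 s1 : R) g0 g1 :
  ordered_group lt -> s0 \in S -> s0 != 0 -> s1 \in S -> s1 != 0 -> g0 != g1 ->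
  unitS S s0 \/ unitS S s1 -> irreducibleSG S [:: (s0, g0); (s1, g1)].
Proof.
move=> og S0 s0n0 S1 s1n0 g01 unit01; set f := [:: _; _].
have f_g0 : gcoef f g0 = s0 by rewrite gcoef_seq2 eqxx eq_sym (negbTE g01) addr0.
have f_g1 : gcoef f g1 = s1 by rewrite gcoef_seq2 eqxx (negbTE g01) add0r.
have supp_f g : gcoef f g != 0 -> g = g0 \/ g = g1.
  rewrite gcoef_seq2; have [<-|_] := eqVneq g0 g; first by left.
  by have [<-|_] := eqVneq g1 g; [right | rewrite addr0 eqxx].
split.
- by move=> g; rewrite gcoef_seq2 rpredD //; case: ifP; rewrite ?rpred0.
- by move/(_ g0); rewrite f_g0 /gcoef big_nil; apply/eqP.
- case/unitSG_monomial => a fa; case/eqP: g01.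
  by rewrite (fa g0) ?f_g0 // (fa g1) ?f_g1.
move=> p q Sp Sq f_pq.
have unit_coef (p' q' : gsum R G) : gsum_eq f (gmul p' q') ->
    exists h, unitS S (gcoef (gmul p' q') h).
  by move=> fE; case: unit01; [exists g0 | exists g1]; rewrite -fE ?f_g0 ?f_g1.
have supp_pq g : gcoef (gmul p q) g != 0 -> g = g0 \/ g = g1.
  by rewrite -f_pq; exact: supp_f.
have [[a pa] | [a qa]] := factor_monomial og Sp Sq supp_pq.
- by left; apply: monomial_unitSG Sp Sq pa (unit_coef _ _ f_pq).
- right; apply: monomial_unitSG Sq Sp qa (unit_coef _ _ _) => g.
  by rewrite f_pq gmulC.
Qed.

End GroupAlgebra.

Lemma furstenberg_unit_split (R : idomainType) (S : semiringClosed R) (s : R) :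
  add_furstenberg S -> (forall x, add_atom S x -> unitS S x) ->
  s \in S -> s != 0 -> ~ unitS S s ->
  exists u t, [/\ unitS S u, t \in S, t != 0 & s = u + t].
Proof.
move=> furst atom_unit Ss sn0 s_nonunit.
have [u [t [/atom_unit u_unit [St sE]]]] := furst s Ss sn0.
exists u, t; split=> //; apply: contra_notN s_nonunit => /eqP t0.
by rewrite sE t0 addr0.
Qed.

Unset Implicit Arguments.

Theorem lemma3p4 (R : idomainType) (S : semiringClosed R)
  (G : zmodType) (lt : rel G) :
  add_reduced S -> add_furstenberg S -> atoms_eq_units S ->
  torsion_free G -> ordered_group lt ->
  forall (s0 s1 : R) (g0 g1 : G),
    s0 \in S -> s0 != 0 -> s1 \in S -> s1 != 0 -> lt g1 g0 ->
    let f : gsum R G := [:: (s0, g0); (s1, g1)] in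
    ((unitS S s0 \/ unitS S s1) -> irreducibleSG S f) /\
    (~ unitS S s0 -> ~ unitS S s1 ->
       exists p q : gsum R G,
         [/\ irreducibleSG S p, irreducibleSG S q & gsum_eq f (gadd p q)]).
Proof.
(* Torsion-freeness only serves to make [G] orderable; here [lt] is given. *)
move=> red furst atoms_units _ og s0 s1 g0 g1 S0 s0n0 S1 s1n0 g10 f.
have g01 : g0 != g1 by case: og => irr _ _ _; apply: contraTneq g10 => ->.
split=> [|s0_nonunit s1_nonunit].
  exact: binomial_irreducible og S0 s0n0 S1 s1n0 g01.
have atom_unit x : add_atom S x -> unitS S x by case: (atoms_units x).
have [a0 [t0 [a0_unit St0 t0n0 s0E]]] :=
  furstenberg_unit_split furst atom_unit S0 s0n0 s0_nonunit.
have [a1 [t1 [a1_unit St1 t1n0 s1E]]] :=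
  furstenberg_unit_split furst atom_unit S1 s1n0 s1_nonunit.
have [[Sa0 [a0n0 _]] [Sa1 [a1n0 _]]] := (a0_unit, a1_unit).
exists [:: (a0, g0); (t1, g1)], [:: (t0, g0); (a1, g1)]; split.
- by apply: binomial_irreducible og _ _ _ _ g01 _ => //; left.
- by apply: binomial_irreducible og _ _ _ _ g01 _ => //; right.
move=> g; rewrite /f /gadd gcoef_cat !gcoef_seq2 addrACA s0E s1E [a1 + t1]addrC.
by case: (g0 == g); case: (g1 == g); rewrite ?addr0.
Qed.
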